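(* Assume the vector variational inequality defined by $F$ and $K$ is monotone and that $\mathrm{Sol}^w(F,K)$ is bounded and nonempty. Then (a) $\mathrm{Sol}^w(F,K)$ is connected; and (b) the domain of the basic multifunction is all of $\Delta$, i.e., $\mathrm{Sol}(F_\xi,K)\neq\emptyset$ for every $\xi\in\Delta$.
   Context: Let $K\subset\mathbb{R}^n$ be a nonempty closed convex set and $F_1,\dots,F_m:K\to\mathbb{R}^n$ continuous functions; write $F=(F_1,\dots,F_m)$ and $F(x)(u)=(\langle F_1(x),u\rangle,\dots,\langle F_m(x),u\rangle)$. The problem is monotone if each $F_l$ is monotone on $K$: $\langle F_l(y)-F_l(x),y-x\rangle\ge0$ for all $x,y\in K$. Let $\Delta=\{\xi\in\mathbb{R}^m_+:\sum_l\xi_l=1\}$ and $F_\xi=\sum_l\xi_lF_l$. For $G:K\to\mathbb{R}^n$, $\mathrm{Sol}(G,K)=\{x\in K:\langle G(x),y-x\rangle\ge0\ \forall y\in K\}$. The basic multifunction is $S:\Delta\rightrightarrows\mathbb{R}^n$, $S(\xi)=\mathrm{Sol}(F_\xi,K)$. The weak Pareto solution set $\mathrm{Sol}^w(F,K)$ is the set of $x\in K$ such that $F(x)(x-y)\notin\operatorname{int}\mathbb{R}^m_+$ for all $y\in K$. *)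

From Stdlib Require Import Reals Lra.
From Stdlib Require Fin.
Open Scope R_scope.

Definition vec (n : nat) := Fin.t n -> R.

Fixpoint fsum (n : nat) : (Fin.t n -> R) -> R :=
  match n return (Fin.t n -> R) -> R with
  | O => fun _ => 0
  | S k => fun f => f Fin.F1 + fsum k (fun i => f (Fin.FS i))
  end.

Definition inner {n : nat} (x y : vec n) : R := fsum n (fun i => x i * y i).
Definition vsub {n : nat} (x y : vec n) : vec n := fun i => x i - y i.
Definition vnorm {n : nat} (x : vec n) : R := sqrt (inner x x).
Definition vdist {n : nat} (x y : vec n) : R := vnorm (vsub x y).

Definition is_open {n : nat} (U : vec n -> Prop) : Prop :=
  forall x, U x -> exists eps, 0 < eps /\ forall y, vdist y x < eps -> U y.

Definition is_closed {n : nat} (K : vec n -> Prop) : Prop :=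
  forall x, (forall eps, 0 < eps -> exists y, K y /\ vdist y x < eps) -> K x.

Definition is_convex {n : nat} (K : vec n -> Prop) : Prop :=
  forall x y t, K x -> K y -> 0 <= t <= 1 ->
    K (fun i => t * x i + (1 - t) * y i).

Definition is_bounded {n : nat} (S : vec n -> Prop) : Prop :=
  exists M, forall x, S x -> vnorm x <= M.

Definition is_connected {n : nat} (S : vec n -> Prop) : Prop :=
  forall U V : vec n -> Prop, is_open U -> is_open V ->
    (forall x, S x -> U x \/ V x) ->
    (forall x, S x -> U x -> V x -> False) ->
    (exists x, S x /\ U x) -> (exists x, S x /\ V x) -> False.

Definition continuous_on {n : nat} (K : vec n -> Prop) (G : vec n -> vec n) : Prop :=
  forall x, K x -> forall eps, 0 < eps -> exists delta, 0 < delta /\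
    forall y, K y -> vdist y x < delta -> vdist (G y) (G x) < eps.

Definition monotone_on {n : nat} (K : vec n -> Prop) (G : vec n -> vec n) : Prop :=
  forall x y, K x -> K y -> 0 <= inner (vsub (G y) (G x)) (vsub y x).

Definition Sol {n : nat} (G : vec n -> vec n) (K : vec n -> Prop) (x : vec n) : Prop :=
  K x /\ forall y, K y -> 0 <= inner (G x) (vsub y x).

Definition simplex (m : nat) (xi : Fin.t m -> R) : Prop :=
  (forall l, 0 <= xi l) /\ fsum m xi = 1.

Definition Fxi {n m : nat} (F : Fin.t m -> vec n -> vec n) (xi : Fin.t m -> R)
  : vec n -> vec n :=
  fun x i => fsum m (fun l => xi l * F l x i).

(* Weak Pareto solutions: F(x)(x - y) not in int R^m_+ (= all components > 0) *)
Definition SolW {n m : nat} (F : Fin.t m -> vec n -> vec n) (K : vec n -> Prop)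
  (x : vec n) : Prop :=
  K x /\ forall y, K y -> ~ (forall l, 0 < inner (F l x) (vsub x y)).

(* A point x is a weak Pareto solution iff it solves the scalarized inequality VI(F_xi, K)
   for some weight xi in the simplex (Gordan's alternative plus compactness of the simplex),
   so Sol^w(F, K) is the union of the sets S(xi), each convex by Minty's lemma.  Every S(xi)
   lies in the ball of radius M bounding Sol^w.  Truncating K to the ball of radius M + 1
   gives problems that are always solvable (a KKM-type argument) and whose solution map is
   upper semicontinuous (compact values, closed graph); they agree with VI(F_xi, K) whenever
   the latter is solvable.  Along the segment from a weight with S nonempty to any other
   weight, solvability is therefore open and closed, which gives (b).  For (a), a separation
   of Sol^w by open sets U, V puts each convex S(xi) entirely into U or into V, and upper
   semicontinuity makes "S(xi) lies in U" open and closed along segments of weights. *)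

From Stdlib Require Import Reals.
From Stdlib Require Fin.
From Stdlib Require Import Lra Lia List FunctionalExtensionality Classical.
Import ListNotations.
Open Scope R_scope.

Lemma fsum_ext n (f g : Fin.t n -> R) : (forall i, f i = g i) -> fsum n f = fsum n g.
Proof.
  induction n; simpl; intros H; auto.
  rewrite H, (IHn (fun i => f (Fin.FS i)) (fun i => g (Fin.FS i))); auto.
Qed.

Lemma fsum_plus n (f g : Fin.t n -> R) : fsum n (fun i => f i + g i) = fsum n f + fsum n g.
Proof. induction n; simpl; [lra|]. rewrite (IHn (fun i => f (Fin.FS i)) (fun i => g (Fin.FS i))). lra. Qed.

Lemma fsum_minus n (f g : Fin.t n -> R) : fsum n (fun i => f i - g i) = fsum n f - fsum n g.
Proof. induction n; simpl; [lra|]. rewrite (IHn (fun i => f (Fin.FS i)) (fun i => g (Fin.FS i))). lra. Qed.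

Lemma fsum_opp n (f : Fin.t n -> R) : fsum n (fun i => - f i) = - fsum n f.
Proof. induction n; simpl; [ring|]. rewrite (IHn (fun i => f (Fin.FS i))). ring. Qed.

Lemma fsum_scal n c (f : Fin.t n -> R) : fsum n (fun i => c * f i) = c * fsum n f.
Proof. induction n; simpl; [lra|]. rewrite (IHn (fun i => f (Fin.FS i))). lra. Qed.

Lemma fsum_zero n : fsum n (fun _ => 0) = 0.
Proof. induction n; simpl; auto. rewrite IHn; lra. Qed.

Lemma fsum_const n c : fsum n (fun _ => c) = INR n * c.
Proof. induction n; simpl fsum; [simpl; ring|]. rewrite IHn, S_INR. ring. Qed.

Lemma fsum_le n (f g : Fin.t n -> R) : (forall i, f i <= g i) -> fsum n f <= fsum n g.
Proof.
  induction n; simpl; intros H; [lra|].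
  pose proof (IHn (fun i => f (Fin.FS i)) (fun i => g (Fin.FS i)) (fun i => H (Fin.FS i))).
  pose proof (H Fin.F1). lra.
Qed.

Lemma fsum_nonneg n (f : Fin.t n -> R) : (forall i, 0 <= f i) -> 0 <= fsum n f.
Proof. intros H. rewrite <- (fsum_zero n). apply fsum_le; auto. Qed.

Lemma fsum_ge_term n (f : Fin.t n -> R) i : (forall j, 0 <= f j) -> f i <= fsum n f.
Proof.
  induction n; [inversion i|]. intros H.
  apply (Fin.caseS' i (fun i => f i <= fsum (S n) f)); simpl.
  - pose proof (fsum_nonneg n (fun j => f (Fin.FS j)) (fun j => H (Fin.FS j))). lra.
  - intros p. pose proof (IHn (fun j => f (Fin.FS j)) p (fun j => H (Fin.FS j))).
    pose proof (H Fin.F1). lra.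
Qed.

Lemma fsum_nonneg_eq0 n (f : Fin.t n -> R) : (forall i, 0 <= f i) -> fsum n f = 0 -> forall i, f i = 0.
Proof. intros H1 H2 i. pose proof (fsum_ge_term n f i H1). pose proof (H1 i). lra. Qed.

Lemma fsum_abs n (f : Fin.t n -> R) : Rabs (fsum n f) <= fsum n (fun i => Rabs (f i)).
Proof.
  induction n; simpl; [rewrite Rabs_R0; lra|].
  eapply Rle_trans; [apply Rabs_triang|]. specialize (IHn (fun i => f (Fin.FS i))). lra.
Qed.

Lemma fsum_comm n m (f : Fin.t n -> Fin.t m -> R) :
  fsum n (fun i => fsum m (fun j => f i j)) = fsum m (fun j => fsum n (fun i => f i j)).
Proof. induction n; simpl; [rewrite fsum_zero; auto|]. rewrite IHn, <- fsum_plus. auto. Qed.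

Lemma fsum_split k p (h : Fin.t (k + p) -> R) :
  fsum (k + p) h = fsum k (fun i => h (Fin.L p i)) + fsum p (fun j => h (Fin.R k j)).
Proof.
  induction k; simpl; [rewrite Rplus_0_l; reflexivity|].
  rewrite (IHk (fun i => h (Fin.FS i))), Rplus_assoc. reflexivity.
Qed.

Lemma fsum_convex_pos m (xi c : Fin.t m -> R) :
  simplex m xi -> (forall l, 0 < c l) -> 0 < fsum m (fun l => xi l * c l).
Proof.
  intros [H0 H1] Hc.
  assert (Hle : forall l, 0 <= xi l * c l) by (intros l; apply Rmult_le_pos; auto; left; auto).
  apply Rnot_le_lt. intros Hsum.
  assert (Z : forall l, xi l * c l = 0) by (apply fsum_nonneg_eq0; auto; pose proof (fsum_nonneg m _ Hle); lra).
  assert (Zxi : forall l, xi l = 0) by (intros l; pose proof (Z l); pose proof (Hc l); nra).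
  rewrite (fsum_ext _ _ _ Zxi), fsum_zero in H1. lra.
Qed.

Lemma quad_form_nonneg k (lam : Fin.t k -> R) (A : Fin.t k -> Fin.t k -> R) :
  (forall i, 0 <= lam i) -> (forall i j, 0 <= A i j + A j i) ->
  0 <= fsum k (fun i => lam i * fsum k (fun j => lam j * A i j)).
Proof.
  intros Hl HA.
  set (Q := fun (B : Fin.t k -> Fin.t k -> R) => fsum k (fun i => fsum k (fun j => lam i * lam j * B i j))).
  assert (E1 : fsum k (fun i => lam i * fsum k (fun j => lam j * A i j)) = Q A).
  { apply fsum_ext; intros i. rewrite <- fsum_scal. apply fsum_ext; intros; ring. }
  assert (E2 : Q A = Q (fun i j => A j i)).
  { unfold Q. rewrite fsum_comm. apply fsum_ext; intros; apply fsum_ext; intros; ring. }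
  assert (E3 : Q (fun i j => A i j + A j i) = Q A + Q (fun i j => A j i)).
  { unfold Q. rewrite <- fsum_plus. apply fsum_ext; intros i. rewrite <- fsum_plus. apply fsum_ext; intros; ring. }
  assert (0 <= Q (fun i j => A i j + A j i)).
  { apply fsum_nonneg; intros i; apply fsum_nonneg; intros j.
    apply Rmult_le_pos; auto. apply Rmult_le_pos; auto. }
  lra.
Qed.

Definition delta {m} (l c : Fin.t m) : R := if Fin.eq_dec l c then 1 else 0.

Lemma delta_sym m (l c : Fin.t m) : delta l c = delta c l.
Proof. unfold delta. destruct (Fin.eq_dec l c), (Fin.eq_dec c l); subst; congruence. Qed.

Lemma fsum_delta m (l : Fin.t m) (x : Fin.t m -> R) : fsum m (fun c => delta l c * x c) = x l.
Proof.
  induction m; [inversion l|].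
  apply (Fin.caseS' l (fun l => fsum (S m) (fun c => delta l c * x c) = x l)); simpl.
  - unfold delta at 1. destruct (Fin.eq_dec Fin.F1 Fin.F1) as [_|C]; [|congruence].
    rewrite (fsum_ext _ _ (fun _ => 0)), fsum_zero; [ring|].
    intros i. unfold delta. destruct (Fin.eq_dec Fin.F1 (Fin.FS i)) as [C|_]; [inversion C|ring].
  - intros p. unfold delta at 1. destruct (Fin.eq_dec (Fin.FS p) Fin.F1) as [C|_]; [inversion C|].
    rewrite <- (IHm p (fun i => x (Fin.FS i))), Rmult_0_l, Rplus_0_l. apply fsum_ext.
    intros i. unfold delta.
    destruct (Fin.eq_dec (Fin.FS p) (Fin.FS i)) as [E|E], (Fin.eq_dec p i) as [E'|E']; auto.
    + exfalso. apply E', Fin.FS_inj; auto.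
    + exfalso. apply E. subst; auto.
Qed.

Lemma simplex_delta m (l : Fin.t m) : simplex m (delta l).
Proof.
  split; [intros c; unfold delta; destruct Fin.eq_dec; lra|].
  rewrite <- (fsum_delta m l (fun _ => 1)). apply fsum_ext; intros; ring.
Qed.

Lemma simplex_normalize k (lam : Fin.t k -> R) : (forall i, 0 <= lam i) -> 0 < fsum k lam ->
  simplex k (fun i => / fsum k lam * lam i).
Proof.
  intros H1 H2. split.
  - intros i. apply Rmult_le_pos; auto. left; apply Rinv_0_lt_compat; auto.
  - rewrite fsum_scal. field. lra.
Qed.

Lemma Rabs_le_inv a b : Rabs a <= b -> -b <= a <= b.
Proof. unfold Rabs; destruct (Rcase_abs a); lra. Qed.

Lemma inner_ext n (x x' y y' : vec n) : (forall i, x i = x' i) -> (forall i, y i = y' i) ->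
  inner x y = inner x' y'.
Proof. intros H1 H2. unfold inner. apply fsum_ext. intros; rewrite H1, H2; auto. Qed.

Lemma inner_sym n (x y : vec n) : inner x y = inner y x.
Proof. unfold inner. apply fsum_ext. intros; ring. Qed.

Lemma inner_scal_r n c (x y : vec n) : inner x (fun i => c * y i) = c * inner x y.
Proof. unfold inner. rewrite <- fsum_scal. apply fsum_ext; intros; ring. Qed.

Lemma inner_lin_l n a b (x y z : vec n) :
  inner (fun i => a * x i + b * y i) z = a * inner x z + b * inner y z.
Proof. unfold inner. rewrite <- !fsum_scal, <- fsum_plus. apply fsum_ext; intros; ring. Qed.

Lemma inner_lin_r n a b (x y z : vec n) :
  inner z (fun i => a * x i + b * y i) = a * inner z x + b * inner z y.
Proof. rewrite inner_sym, inner_lin_l, (inner_sym _ x), (inner_sym _ y); auto. Qed.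

Lemma inner_sub_l n (x y z : vec n) : inner (vsub x y) z = inner x z - inner y z.
Proof. unfold inner, vsub. rewrite <- fsum_minus. apply fsum_ext; intros; ring. Qed.

Lemma inner_sub_r n (x y z : vec n) : inner z (vsub x y) = inner z x - inner z y.
Proof. rewrite inner_sym, inner_sub_l, (inner_sym _ x), (inner_sym _ y); auto. Qed.

Lemma inner_fsum_r n k (a : vec n) (f : Fin.t k -> vec n) :
  inner a (fun c => fsum k (fun j => f j c)) = fsum k (fun j => inner a (f j)).
Proof.
  unfold inner.
  rewrite (fsum_ext _ _ (fun c => fsum k (fun j => a c * f j c))) by (intros; rewrite fsum_scal; auto).
  apply fsum_comm.
Qed.

Lemma inner_self_nonneg n (x : vec n) : 0 <= inner x x.
Proof. unfold inner. apply fsum_nonneg. intros; nra. Qed.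

Lemma Cauchy_Schwarz_sq n (x y : vec n) : (inner x y)^2 <= inner x x * inner y y.
Proof.
  set (a := inner x x); set (b := inner x y); set (c := inner y y).
  assert (Q : forall t, 0 <= a + 2 * b * t + c * t^2).
  { intros t. pose proof (inner_self_nonneg n (fun i => 1 * x i + t * y i)) as H.
    rewrite inner_lin_l, !inner_lin_r, (inner_sym _ y x) in H. fold a b c in H. nra. }
  assert (0 <= a) by apply inner_self_nonneg. assert (0 <= c) by apply inner_self_nonneg.
  destruct (Req_dec c 0) as [E|E].
  - destruct (Req_dec b 0) as [Eb|Eb]; [rewrite Eb, E; nra|].
    pose proof (Q (-(a+1)/(2*b))) as Hq. rewrite E in Hq.
    assert (2 * b * (-(a+1)/(2*b)) = -(a+1)) by (field; auto). nra.
  - pose proof (Q (-b/c)) as Hq.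
    replace (a + 2 * b * (-b/c) + c * (-b/c)^2) with (a - b^2/c) in Hq by (field; lra).
    assert (b^2 = b^2 / c * c) by (field; lra). nra.
Qed.

Lemma vnorm_nonneg n (x : vec n) : 0 <= vnorm x.
Proof. apply sqrt_pos. Qed.

Lemma vnorm_sq n (x : vec n) : vnorm x * vnorm x = inner x x.
Proof. apply sqrt_sqrt, inner_self_nonneg. Qed.

Lemma vnorm_le_of_sq n (x : vec n) r : 0 <= r -> inner x x <= r * r -> vnorm x <= r.
Proof. intros H1 H2. rewrite <- vnorm_sq in H2. pose proof (vnorm_nonneg n x). nra. Qed.

Lemma Cauchy_Schwarz n (x y : vec n) : Rabs (inner x y) <= vnorm x * vnorm y.
Proof.
  pose proof (Cauchy_Schwarz_sq n x y). rewrite <- (vnorm_sq n x), <- (vnorm_sq n y) in H.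
  pose proof (vnorm_nonneg n x). pose proof (vnorm_nonneg n y).
  apply Rsqr_incr_0_var; [|apply Rmult_le_pos; auto].
  rewrite <- Rsqr_abs. unfold Rsqr. simpl in H. nra.
Qed.

Lemma inner_le n (x y : vec n) : inner x y <= vnorm x * vnorm y.
Proof. pose proof (Cauchy_Schwarz n x y). pose proof (Rle_abs (inner x y)). lra. Qed.

Lemma vnorm_ext n (x y : vec n) : (forall i, x i = y i) -> vnorm x = vnorm y.
Proof. intros H. unfold vnorm. f_equal. apply inner_ext; auto. Qed.

Lemma vnorm_triang n (x y : vec n) : vnorm (fun i => x i + y i) <= vnorm x + vnorm y.
Proof.
  pose proof (vnorm_nonneg n x); pose proof (vnorm_nonneg n y).
  apply vnorm_le_of_sq; [lra|].
  rewrite (inner_ext _ _ (fun i => 1 * x i + 1 * y i) _ (fun i => 1 * x i + 1 * y i)) by (intros; ring).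
  rewrite inner_lin_l, !inner_lin_r, (inner_sym _ y x).
  pose proof (inner_le n x y). rewrite <- !vnorm_sq. nra.
Qed.

Lemma vnorm_scal n c (x : vec n) : vnorm (fun i => c * x i) = Rabs c * vnorm x.
Proof.
  unfold vnorm. replace (inner (fun i => c * x i) (fun i => c * x i)) with (Rsqr c * inner x x).
  - rewrite sqrt_mult_alt by apply Rle_0_sqr. rewrite sqrt_Rsqr_abs; auto.
  - unfold inner, Rsqr. rewrite <- fsum_scal. apply fsum_ext; intros; ring.
Qed.

Lemma vnorm_lin n a b (x y : vec n) :
  vnorm (fun i => a * x i + b * y i) <= Rabs a * vnorm x + Rabs b * vnorm y.
Proof.
  eapply Rle_trans; [apply (vnorm_triang n (fun i => a * x i) (fun i => b * y i))|].
  rewrite !vnorm_scal. lra.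
Qed.

Lemma vnorm_convex n t (x y : vec n) : 0 <= t <= 1 ->
  vnorm (fun i => t * x i + (1 - t) * y i) <= t * vnorm x + (1 - t) * vnorm y.
Proof. intros H. eapply Rle_trans; [apply vnorm_lin|]. rewrite !Rabs_pos_eq by lra. lra. Qed.

Lemma vnorm_fsum n m (f : Fin.t m -> vec n) :
  vnorm (fun i => fsum m (fun l => f l i)) <= fsum m (fun l => vnorm (f l)).
Proof.
  induction m; simpl.
  - rewrite (vnorm_ext _ _ (fun i => 0 * (fun _ => 0) i)), vnorm_scal, Rabs_R0 by (intros; ring). lra.
  - eapply Rle_trans; [apply (vnorm_triang n (f Fin.F1) (fun i => fsum m (fun l => f (Fin.FS l) i)))|].
    specialize (IHm (fun l => f (Fin.FS l))). simpl in IHm. lra.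
Qed.

Lemma Rabs_coord_le_vnorm n (x : vec n) i : Rabs (x i) <= vnorm x.
Proof.
  unfold vnorm. rewrite <- sqrt_Rsqr_abs. apply sqrt_le_1_alt.
  apply (fsum_ge_term n (fun i => x i * x i)). intros; nra.
Qed.

Lemma vdist_nonneg n (x y : vec n) : 0 <= vdist x y.
Proof. apply vnorm_nonneg. Qed.

Lemma vdist_refl n (x : vec n) : vdist x x = 0.
Proof.
  unfold vdist. rewrite (vnorm_ext _ _ (fun i => 0 * x i)), vnorm_scal, Rabs_R0 by (intros; unfold vsub; ring).
  ring.
Qed.

Lemma vdist_sym n (x y : vec n) : vdist x y = vdist y x.
Proof.
  unfold vdist. rewrite (vnorm_ext _ (vsub y x) (fun i => -1 * vsub x y i)) by (intros; unfold vsub; ring).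
  rewrite vnorm_scal, Rabs_left by lra. ring.
Qed.

Lemma vdist_triang n (x y z : vec n) : vdist x z <= vdist x y + vdist y z.
Proof.
  unfold vdist. eapply Rle_trans; [|apply vnorm_triang].
  right. apply vnorm_ext. intros; unfold vsub; ring.
Qed.

Lemma vnorm_le_vdist n (x y : vec n) : vnorm x <= vnorm y + vdist x y.
Proof.
  unfold vdist. eapply Rle_trans; [|apply vnorm_triang].
  right. apply vnorm_ext. intros; unfold vsub; ring.
Qed.

Lemma vdist_le_vnorm n (x y : vec n) : vdist x y <= vnorm x + vnorm y.
Proof.
  unfold vdist. rewrite (vnorm_ext _ _ (fun i => 1 * x i + (-1) * y i)) by (intros; unfold vsub; ring).
  eapply Rle_trans; [apply vnorm_lin|]. rewrite Rabs_R1, (Rabs_left (-1)) by lra. lra.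
Qed.

Lemma vdist_convex n s r (a b : vec n) :
  vdist (fun i => s * a i + (1 - s) * b i) (fun i => r * a i + (1 - r) * b i) = Rabs (s - r) * vdist a b.
Proof. unfold vdist. rewrite <- vnorm_scal. apply vnorm_ext. intros; unfold vsub; ring. Qed.

Lemma vsub_convex n t (y x : vec n) : vsub (fun i => t * y i + (1 - t) * x i) x = (fun i => t * vsub y x i).
Proof. apply functional_extensionality; intros; unfold vsub; ring. Qed.

Lemma inner_lipschitz_r n (a x y : vec n) : Rabs (inner a x - inner a y) <= vnorm a * vdist x y.
Proof. rewrite <- inner_sub_r. apply Cauchy_Schwarz. Qed.

Lemma inner_lipschitz_l n (a b v : vec n) : Rabs (inner a v - inner b v) <= vdist a b * vnorm v.
Proof. rewrite <- inner_sub_l. apply Cauchy_Schwarz. Qed.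

(* The elementary estimate behind every choice of radius [a / (L + 1)] below. *)
Lemma mult_div_succ_lt L a : 0 <= L -> 0 < a -> L * (a / (L + 1)) < a.
Proof.
  intros. replace (L * (a / (L + 1))) with (a - a / (L + 1)) by (field; lra).
  assert (0 < a / (L+1)) by (apply Rdiv_lt_0_compat; lra). lra.
Qed.

(** * Closed sets and compactness *)

Lemma closed_ext n (A B : vec n -> Prop) : (forall x, A x <-> B x) -> is_closed A -> is_closed B.
Proof.
  intros E HA x Hx. apply E, HA. intros eps He.
  destruct (Hx eps He) as [y [Hy Hd]]. exists y; split; auto; apply E; auto.
Qed.

Lemma closed_and n (A B : vec n -> Prop) : is_closed A -> is_closed B -> is_closed (fun x => A x /\ B x).
Proof.
  intros HA HB x Hx.
  split; [apply HA|apply HB]; intros eps He; destruct (Hx eps He) as [y [[Ay By] Hd]]; exists y; auto.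
Qed.

Lemma closed_compl_open n (A : vec n -> Prop) : is_closed A -> is_open (fun x => ~ A x).
Proof.
  intros HA x Hx. apply NNPP. intros C. apply Hx, HA. intros eps Heps.
  apply NNPP. intros C2. apply C. exists eps. split; auto.
  intros y Hy Ay. apply C2. exists y; auto.
Qed.

Lemma open_compl_closed n (U : vec n -> Prop) : is_open U -> is_closed (fun x => ~ U x).
Proof.
  intros HU x Hx Ux. destruct (HU x Ux) as [eps [He Hy]].
  destruct (Hx eps He) as [y [nUy Hd]]. auto.
Qed.

Lemma closed_ge0_lipschitz n (f : vec n -> R) L : 0 <= L ->
  (forall x y, Rabs (f x - f y) <= L * vdist x y) -> is_closed (fun x => 0 <= f x).
Proof.
  intros HL Hf x Hx. apply Rnot_lt_le. intros P.
  destruct (Hx ((- f x) / (L + 1))) as [y [Hy Hd]]; [apply Rdiv_lt_0_compat; lra|].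
  pose proof (Hf y x) as Hyx. apply Rabs_le_inv in Hyx.
  assert (L * vdist y x <= L * (- f x / (L + 1))) by (apply Rmult_le_compat_l; lra).
  pose proof (mult_div_succ_lt L (- f x)). lra.
Qed.

Lemma closed_vnorm_le n r : is_closed (fun x : vec n => vnorm x <= r).
Proof.
  apply (closed_ext _ (fun x => 0 <= r - vnorm x)); [intros; lra|].
  apply (closed_ge0_lipschitz n _ 1); [lra|]. intros x y.
  pose proof (vnorm_le_vdist n x y). pose proof (vnorm_le_vdist n y x). rewrite vdist_sym in H0.
  apply Rabs_le; lra.
Qed.

Lemma open_vnorm_gt n r : is_open (fun x : vec n => r < vnorm x).
Proof.
  intros x Hx. exists (vnorm x - r). split; [lra|]. intros y Hy.
  pose proof (vnorm_le_vdist n x y). rewrite vdist_sym in H. lra.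
Qed.

Lemma open_vnorm_lt n r : is_open (fun x : vec n => vnorm x < r).
Proof.
  intros x Hx. exists (r - vnorm x). split; [lra|]. intros y Hy.
  pose proof (vnorm_le_vdist n y x). lra.
Qed.

Lemma fsum_lipschitz m (x y : vec m) : Rabs (fsum m x - fsum m y) <= INR m * vdist x y.
Proof.
  rewrite <- fsum_minus, <- fsum_const. eapply Rle_trans; [apply fsum_abs|].
  apply fsum_le. intros i. apply (Rabs_coord_le_vnorm m (vsub x y) i).
Qed.

Lemma simplex_closed m : is_closed (simplex m).
Proof.
  intros x Hx. split.
  - intros l. apply Rnot_lt_le. intros P.
    destruct (Hx (- x l)) as [y [[Hy _] Hd]]; [lra|].
    pose proof (Rabs_coord_le_vnorm m (vsub y x) l) as H. apply Rabs_le_inv in H.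
    change (vsub y x l) with (y l - x l) in H. unfold vdist in Hd. pose proof (Hy l). lra.
  - destruct (Req_dec (fsum m x) 1) as [E|E]; [exact E|exfalso].
    set (d := Rabs (fsum m x - 1)). assert (P : 0 < d) by (apply Rabs_pos_lt; lra).
    destruct (Hx (d / (INR m + 1))) as [y [[_ Hy] Hd]]; [apply Rdiv_lt_0_compat; pose proof (pos_INR m); lra|].
    pose proof (fsum_lipschitz m x y) as Hl. rewrite Hy, vdist_sym in Hl.
    assert (INR m * vdist y x <= INR m * (d / (INR m + 1))) by (apply Rmult_le_compat_l; [apply pos_INR|lra]).
    pose proof (mult_div_succ_lt (INR m) d (pos_INR m) P). unfold d in *. lra.
Qed.

Definition box n (R0 : R) (x : vec n) := forall i, Rabs (x i) <= R0.

Lemma vnorm_le_box n R0 (x : vec n) : vnorm x <= R0 -> box n R0 x.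
Proof. intros H i. pose proof (Rabs_coord_le_vnorm n x i). lra. Qed.

Lemma simplex_box m xi : simplex m xi -> box m 1 xi.
Proof. intros [H1 H2] l. rewrite Rabs_pos_eq by auto. rewrite <- H2. apply fsum_ge_term; auto. Qed.

Definition vcons {n} (t : R) (v : vec n) : vec (S n) := fun i => Fin.caseS' i (fun _ => R) t v.
Definition vtl {n} (x : vec (S n)) : vec n := fun i => x (Fin.FS i).

Lemma vcons_eta n (x : vec (S n)) : vcons (x Fin.F1) (vtl x) = x.
Proof.
  apply functional_extensionality. intros i.
  apply (Fin.caseS' i (fun i => vcons (x Fin.F1) (vtl x) i = x i)); reflexivity.
Qed.

Lemma vdist_vcons_le n s t (w v : vec n) : vdist (vcons s w) (vcons t v) <= Rabs (s - t) + vdist w v.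
Proof.
  pose proof (Rabs_pos (s - t)); pose proof (vdist_nonneg n w v).
  apply vnorm_le_of_sq; [lra|].
  change (inner (vsub (vcons s w) (vcons t v)) (vsub (vcons s w) (vcons t v)))
    with ((s - t) * (s - t) + inner (vsub w v) (vsub w v)).
  rewrite <- (vnorm_sq n (vsub w v)). fold (vdist w v).
  assert ((s - t) * (s - t) = Rabs (s - t) * Rabs (s - t))
    by (rewrite <- Rabs_mult; symmetry; apply Rabs_pos_eq, Rle_0_sqr).
  nra.
Qed.

Definition minpos (l : list {d : R | 0 < d}) : R := fold_right (fun d acc => Rmin (proj1_sig d) acc) 1 l.

Lemma minpos_pos l : 0 < minpos l.
Proof. induction l; simpl; [lra|]. apply Rmin_glb_lt; auto. apply proj2_sig. Qed.

Lemma minpos_le l d : In d l -> minpos l <= proj1_sig d.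
Proof.
  induction l; simpl; [contradiction|]. intros [E|H]; [subst; apply Rmin_l|].
  eapply Rle_trans; [apply Rmin_r|auto].
Qed.

Definition box_compact n R0 : Prop :=
  forall (J : Type) (U : J -> vec n -> Prop), (forall j, is_open (U j)) ->
    (forall x, box n R0 x -> exists j, U j x) ->
    exists l : list J, forall x, box n R0 x -> exists j, In j l /\ U j x.

Lemma box_compact_0 R0 : box_compact 0 R0.
Proof.
  intros J U Uo Ucov. set (x0 := (fun i => Fin.case0 (fun _ => R) i) : vec 0).
  destruct (Ucov x0) as [j Hj]; [intros i; inversion i|].
  exists [j]. intros x _. exists j. split; [left; auto|].
  destruct (Uo j x0 Hj) as [eps [He Hy]]. apply Hy.
  unfold vdist, vnorm, inner. simpl. rewrite sqrt_0. auto.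
Qed.

Lemma box_tube n R0 J (U : J -> vec (S n) -> Prop) : box_compact n R0 ->
  (forall j, is_open (U j)) -> (forall x, box (S n) R0 x -> exists j, U j x) ->
  forall t, Rabs t <= R0 -> exists d0 l, 0 < d0 /\
    forall x, box (S n) R0 x -> Rabs (x Fin.F1 - t) < d0 -> exists j, In j l /\ U j x.
Proof.
  intros Hn Uo Ucov t Ht.
  set (W := fun (p : J * {d : R | 0 < d}) (v : vec n) => exists eta, 0 < eta /\
              forall s w, Rabs (s - t) < proj1_sig (snd p) -> vdist w v < eta -> U (fst p) (vcons s w)).
  destruct (Hn _ W) as [l' Hl'].
  - intros p v [eta [Heta Hv]]. exists (eta/2). split; [lra|]. intros v' Hv'.
    exists (eta/2). split; [lra|]. intros s w Hs Hw. apply Hv; auto.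
    pose proof (vdist_triang n w v' v). lra.
  - intros v Hv.
    assert (Hb : box (S n) R0 (vcons t v)).
    { intros i. apply (Fin.caseS' i (fun i => Rabs (vcons t v i) <= R0)); simpl; auto. }
    destruct (Ucov _ Hb) as [j Hj]. destruct (Uo j _ Hj) as [eps [He Hy]].
    assert (He2 : 0 < eps / 2) by lra.
    exists (j, exist _ (eps/2) He2), (eps/2). split; [lra|]. simpl. intros s w Hs Hw.
    apply Hy. pose proof (vdist_vcons_le n s t w v). lra.
  - exists (minpos (map snd l')), (map fst l'). split; [apply minpos_pos|]. intros x Hx Hxt.
    destruct (Hl' (vtl x)) as [p [Hp [eta [Heta Hw]]]]; [intros i; apply Hx|].
    exists (fst p). split; [apply in_map; auto|]. rewrite <- vcons_eta. apply Hw.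
    + pose proof (minpos_le (map snd l') (snd p) (in_map _ _ _ Hp)). lra.
    + rewrite vdist_refl; auto.
Qed.

(* Induction on the dimension: sweep the first coordinate from [-R0] to [R0], the supremum
   of the covered heights being pushed further by the tube lemma. *)
Lemma box_compact_S n R0 : box_compact n R0 -> box_compact (S n) R0.
Proof.
  intros Hn J U Uo Ucov.
  destruct (Rlt_dec R0 0) as [Rneg|Rpos].
  { exists []. intros x Hx. pose proof (Hx Fin.F1). pose proof (Rabs_pos (x Fin.F1)). lra. }
  set (covered := fun s => exists l : list J,
         forall x, box (S n) R0 x -> x Fin.F1 <= s -> exists j, In j l /\ U j x).
  assert (Hlow : forall s, s < - R0 -> covered s).
  { intros s Hs. exists []. intros x Hx Hs2. pose proof (Rabs_le_inv _ _ (Hx Fin.F1)). lra. }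
  set (E := fun s => s <= R0 /\ covered s).
  destruct (completeness E) as [t [Hub Hlub]].
  { exists R0. intros s [Hs _]; auto. }
  { exists (-R0-1). split; [lra|apply Hlow; lra]. }
  assert (HtR : t <= R0) by (apply Hlub; intros s [Hs _]; auto).
  assert (HtL : - R0 <= t).
  { apply Rnot_lt_le. intros C. assert (E ((t - R0)/2)) as Hm by (split; [lra|apply Hlow; lra]).
    apply Hub in Hm. lra. }
  destruct (box_tube n R0 J U Hn Uo Ucov t) as [d0 [l0 [Hd0 Tube]]]; [apply Rabs_le; lra|].
  assert (Hs : exists s, E s /\ t - d0 < s).
  { apply NNPP. intros C. assert (t <= t - d0); [|lra]. apply Hlub. intros s Hs.
    apply Rnot_lt_le. intros Hlt. apply C. exists s. split; auto. }
  destruct Hs as [s [[HsR [l1 Hl1]] Hst]].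
  assert (Hcov : covered (Rmin (t + d0/2) R0)).
  { exists (l1 ++ l0). intros x Hx Hxs.
    destruct (Rle_dec (x Fin.F1) s) as [Hle|Hgt].
    - destruct (Hl1 x Hx Hle) as [j [Hj1 Hj2]]. exists j. split; auto. apply in_or_app; auto.
    - assert (x Fin.F1 <= t + d0/2) by (eapply Rle_trans; [apply Hxs|apply Rmin_l]).
      destruct (Tube x Hx) as [j [Hj1 Hj2]]; [apply Rabs_def1; lra|].
      exists j. split; auto. apply in_or_app; auto. }
  destruct (Rle_dec R0 (t + d0/2)) as [Hfin|Hnf].
  - rewrite Rmin_right in Hcov by lra. destruct Hcov as [l Hl]. exists l. intros x Hx.
    apply Hl; auto. pose proof (Rabs_le_inv _ _ (Hx Fin.F1)). lra.
  - rewrite Rmin_left in Hcov by lra. assert (E (t + d0/2)) as Hm by (split; [lra|auto]).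
    apply Hub in Hm. lra.
Qed.

Theorem box_compact_all n R0 : box_compact n R0.
Proof. induction n; [apply box_compact_0|apply box_compact_S; auto]. Qed.

Theorem closed_bounded_FIP n R0 (B : vec n -> Prop) (J : Type) (A : J -> vec n -> Prop) :
  is_closed B -> (forall x, B x -> box n R0 x) -> (forall j, is_closed (A j)) ->
  (forall l : list J, exists x, B x /\ forall j, In j l -> A j x) ->
  exists x, B x /\ forall j, A j x.
Proof.
  intros HBc Hbox HA Hfin. apply NNPP. intros C.
  set (U := fun (o : option J) x => match o with None => ~ B x | Some j => ~ A j x end).
  destruct (box_compact_all n R0 (option J) U) as [lo Hlo].
  - intros [j|]; simpl; apply closed_compl_open; auto.
  - intros x _. destruct (classic (B x)) as [Bx|Bx]; [|exists None; auto].
    assert (exists j, ~ A j x) as [j Hj].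
    { apply NNPP; intros C2. apply C. exists x. split; auto.
      intros j. apply NNPP. intros C3. apply C2. exists j; auto. }
    exists (Some j); auto.
  - destruct (Hfin (flat_map (fun o => match o with Some j => [j] | None => [] end) lo)) as [x [Bx Hx]].
    destruct (Hlo x (Hbox x Bx)) as [[j|] [Ho Hu]]; simpl in Hu; auto.
    apply Hu, Hx. apply in_flat_map. exists (Some j). split; auto. left; auto.
Qed.

(* Bolzano–Weierstrass, phrased without sequences. *)
Theorem closed_bounded_cluster n R0 (B : vec n -> Prop) (P : R -> vec n -> Prop) t0 :
  is_closed B -> (forall x, B x -> box n R0 x) ->
  (forall d, 0 < d -> exists t x, Rabs (t - t0) < d /\ B x /\ P t x) ->
  exists xb, B xb /\ forall d e, 0 < d -> 0 < e ->
    exists t x, Rabs (t - t0) < d /\ B x /\ P t x /\ vdist x xb < e.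
Proof.
  intros HB Hbox H.
  set (A := fun (d : {d : R | 0 < d}) z => forall e, 0 < e ->
              exists t x, Rabs (t - t0) < proj1_sig d /\ B x /\ P t x /\ vdist x z < e).
  destruct (closed_bounded_FIP n R0 B _ A HB Hbox) as [xb [Bxb Hxb]].
  - intros d z Hz e He. destruct (Hz (e/2)) as [w [Aw Hw]]; [lra|].
    destruct (Aw (e/2)) as [t [x [H1 [H2 [H3 H4]]]]]; [lra|].
    exists t, x. repeat split; auto. pose proof (vdist_triang n x w z). lra.
  - intros l. destruct (H (minpos l) (minpos_pos l)) as [t [x [H1 [H2 H3]]]].
    exists x. split; auto. intros d Hd e He. exists t, x. repeat split; auto.
    + pose proof (minpos_le l d Hd). lra.
    + rewrite vdist_refl; auto.
  - exists xb. split; auto. intros d e Hd He. apply (Hxb (exist _ d Hd)); auto.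
Qed.

(** * Theorems of the alternative *)

Definition fcons {A} {k} (a : A) (f : Fin.t k -> A) : Fin.t (S k) -> A :=
  fun i => Fin.caseS' i (fun _ => A) a f.

Lemma fcons_all {A} k (a : A) f (P : A -> Prop) :
  P a -> (forall i, P (f i)) -> forall i : Fin.t (S k), P (fcons a f i).
Proof. intros H1 H2 i. apply (Fin.caseS' i (fun i => P (fcons a f i))); simpl; auto. Qed.

Definition farkas_alternative d k (a : Fin.t k -> vec d) (b : vec d) : Prop :=
  (exists x, (forall i, inner (a i) x <= 0) /\ 0 < inner b x) \/
  (exists lam : Fin.t k -> R, (forall i, 0 <= lam i) /\ forall c, b c = fsum k (fun i => lam i * a i c)).

Lemma inner_axpy_l n r (u w x : vec n) : inner (fun c => u c - r * w c) x = inner u x - r * inner w x.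
Proof. unfold inner. rewrite <- fsum_scal, <- fsum_minus. apply fsum_ext; intros; ring. Qed.

Lemma inner_axpy_r n r (u w x : vec n) : inner x (fun c => u c - r * w c) = inner x u - r * inner x w.
Proof. rewrite inner_sym, inner_axpy_l, (inner_sym _ u), (inner_sym _ w). auto. Qed.

(* Inductive step of Farkas' lemma when [x0] separates [b] from the cone of the last [k]
   generators but not from [a0]: project everything along [a0] onto the hyperplane
   [inner _ x0 = 0] and solve the problem for the [k] projected generators. *)
Lemma farkas_project d k (a : Fin.t (S k) -> vec d) (b x0 : vec d) :
  let a0 := a Fin.F1 in let a' := fun i => a (Fin.FS i) in
  (forall i, inner (a' i) x0 <= 0) -> 0 < inner b x0 -> 0 < inner a0 x0 ->
  let al := inner a0 x0 in
  farkas_alternative d k (fun i c => a' i c - (inner (a' i) x0 / al) * a0 c)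
                         (fun c => b c - (inner b x0 / al) * a0 c) ->
  farkas_alternative d (S k) a b.
Proof.
  intros a0 a' Hx0 Hbx0 Hal al Halt. assert (Hal0 : al <> 0) by (unfold al; lra).
  destruct Halt as [[x [Hx Hbx]] | [lam [Hl Hb]]].
  - left. set (x' := fun c => x c - (inner a0 x / al) * x0 c). exists x'.
    assert (E : forall u, inner u x' = inner u x - (inner a0 x / al) * inner u x0) by (intros; apply inner_axpy_r).
    rewrite inner_axpy_l in Hbx. split.
    + intros i. apply (Fin.caseS' i (fun i => inner (a i) x' <= 0)); fold a0; simpl.
      * rewrite E. change (inner a0 x0) with al.
        replace (inner a0 x / al * al) with (inner a0 x) by (field; exact Hal0). lra.
      * intros p. rewrite E. specialize (Hx p). fold (a' p). rewrite inner_axpy_l in Hx.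
        replace (inner a0 x / al * inner (a' p) x0) with (inner (a' p) x0 / al * inner a0 x) by (field; exact Hal0).
        auto.
    + rewrite E. replace (inner a0 x / al * inner b x0) with (inner b x0 / al * inner a0 x) by (field; exact Hal0).
      auto.
  - right. set (s := fsum k (fun i => lam i * inner (a' i) x0)).
    assert (Hs : s <= 0).
    { rewrite <- (fsum_zero k). apply fsum_le. intros i. specialize (Hx0 i). specialize (Hl i). nra. }
    exists (fcons ((inner b x0 - s) / al) lam). split.
    + apply fcons_all; auto. unfold Rdiv. apply Rmult_le_pos; [lra|]. left. apply Rinv_0_lt_compat. exact Hal.
    + intros c. simpl. specialize (Hb c). simpl in Hb.
      assert (Hsplit : fsum k (fun i => lam i * a' i c) =
                       fsum k (fun i => lam i * (a' i c - inner (a' i) x0 / al * a0 c)) + s / al * a0 c).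
      { unfold s. replace (fsum k (fun i => lam i * inner (a' i) x0) / al * a0 c)
          with (a0 c / al * fsum k (fun i => lam i * inner (a' i) x0)) by (field; exact Hal0).
        rewrite <- fsum_scal, <- fsum_plus.
        apply fsum_ext; intros; field; exact Hal0. }
      change (fsum k (fun i => lam i * a (Fin.FS i) c)) with (fsum k (fun i => lam i * a' i c)).
      rewrite Hsplit, <- Hb. fold a0. field. exact Hal0.
Qed.

Theorem farkas d k (a : Fin.t k -> vec d) (b : vec d) : farkas_alternative d k a b.
Proof.
  revert a b. induction k as [|k IH]; intros a b.
  - destruct (Rlt_dec 0 (inner b b)) as [Hp|Hp].
    + left. exists b. split; auto. intros i; inversion i.
    + right. exists (fun _ => 0). split; [intros; lra|]. intros c. simpl. unfold inner in Hp.
      assert (b c * b c <= 0) by (eapply Rle_trans; [apply (fsum_ge_term d (fun i => b i * b i)); intros; nra|lra]).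
      nra.
  - set (a0 := a Fin.F1). set (a' := fun i => a (Fin.FS i)).
    destruct (IH a' b) as [[x0 [Hx0 Hbx0]] | [lam [Hl Hb]]].
    + destruct (Rle_dec (inner a0 x0) 0) as [Ha0|Ha0].
      * left. exists x0. split; auto. intros i. apply (Fin.caseS' i (fun i => inner (a i) x0 <= 0)); auto.
      * apply (farkas_project d k a b x0); [exact Hx0|exact Hbx0|fold a0; lra|apply IH].
    + right. exists (fcons 0 lam). split; [apply fcons_all; auto; lra|].
      intros c. simpl. rewrite Hb. unfold a'. ring.
Qed.

Fixpoint fcat {A} k p : (Fin.t k -> A) -> (Fin.t p -> A) -> Fin.t (k + p) -> A :=
  match k return (Fin.t k -> A) -> (Fin.t p -> A) -> Fin.t (k + p) -> A with
  | 0 => fun _ g => g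
  | S k' => fun f g i => Fin.caseS' i (fun _ => A) (f Fin.F1) (fcat k' p (fun i => f (Fin.FS i)) g)
  end.

Lemma fcat_L {A} k p (f : Fin.t k -> A) g i : fcat k p f g (Fin.L p i) = f i.
Proof.
  induction k; [inversion i|].
  apply (Fin.caseS' i (fun i => fcat (S k) p f g (Fin.L p i) = f i)); simpl; auto.
  intros q. apply (IHk (fun i => f (Fin.FS i))).
Qed.

Lemma fcat_R {A} k p (f : Fin.t k -> A) g j : fcat k p f g (Fin.R k j) = g j.
Proof. induction k; simpl; auto. Qed.

(* Gordan's alternative, from Farkas' lemma applied to [b = (1,...,1)] and the generators
   [a j] together with the negated unit vectors. *)
Theorem gordan k m (a : Fin.t k -> vec m) : (0 < k)%nat ->
  (exists lam, simplex k lam /\ forall l, 0 < fsum k (fun j => lam j * a j l)) \/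
  (exists xi, simplex m xi /\ forall j, inner xi (a j) <= 0).
Proof.
  intros Hk. destruct m as [|m].
  { left. destruct k; [lia|]. exists (delta Fin.F1). split; [apply simplex_delta|]. intros l; inversion l. }
  set (e := fun (l c : Fin.t (S m)) => - delta l c).
  destruct (farkas (S m) (k + S m) (fcat k (S m) a e) (fun _ => 1)) as [[x [Hx Hb]]|[lam [Hl Hb]]].
  - right.
    assert (Hxp : forall l, 0 <= x l).
    { intros l. specialize (Hx (Fin.R k l)). rewrite fcat_R in Hx. unfold e in Hx.
      rewrite (inner_ext _ _ (fun c => -1 * delta l c) _ x), inner_sym, inner_scal_r in Hx by (intros; ring).
      unfold inner in Hx. rewrite (fsum_ext _ _ (fun c => delta l c * x c)), fsum_delta in Hx by (intros; ring).
      lra. }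
    replace (inner (fun _ => 1) x) with (fsum (S m) x) in Hb by (unfold inner; apply fsum_ext; intros; ring).
    exists (fun l => / fsum (S m) x * x l). split; [apply simplex_normalize; auto|].
    intros j. specialize (Hx (Fin.L (S m) j)). rewrite fcat_L in Hx.
    rewrite inner_sym, inner_scal_r.
    assert (0 < / fsum (S m) x) by (apply Rinv_0_lt_compat; lra). nra.
  - left. set (lamL := fun j => lam (Fin.L (S m) j)).
    assert (Hc : forall c, fsum k (fun j => lamL j * a j c) = 1 + lam (Fin.R k c)).
    { intros c.
      assert (HL : fsum k (fun i => lam (Fin.L (S m) i) * fcat k (S m) a e (Fin.L (S m) i) c)
                   = fsum k (fun j => lamL j * a j c)) by (apply fsum_ext; intros; rewrite fcat_L; auto).
      assert (HR : fsum (S m) (fun j => lam (Fin.R k j) * fcat k (S m) a e (Fin.R k j) c) = - lam (Fin.R k c)).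
      { rewrite (fsum_ext _ _ (fun j => -1 * (delta c j * lam (Fin.R k j))))
          by (intros j; rewrite fcat_R; unfold e; rewrite delta_sym; ring).
        rewrite fsum_scal, fsum_delta. ring. }
      rewrite (Hb c), fsum_split, HL, HR. ring. }
    assert (HT : 0 < fsum k lamL).
    { apply Rnot_le_lt. intros P.
      assert (Z : forall j, lamL j = 0)
        by (apply fsum_nonneg_eq0; [intros j; apply Hl|pose proof (fsum_nonneg k lamL (fun j => Hl _)); lra]).
      specialize (Hc Fin.F1). rewrite (fsum_ext _ _ (fun _ => 0)), fsum_zero in Hc by (intros j; rewrite Z; ring).
      pose proof (Hl (Fin.R k Fin.F1)). lra. }
    exists (fun j => / fsum k lamL * lamL j). split; [apply simplex_normalize; auto; intros j; apply Hl|].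
    intros l. rewrite (fsum_ext _ _ (fun j => / fsum k lamL * (lamL j * a j l))) by (intros; ring).
    rewrite fsum_scal, Hc. pose proof (Hl (Fin.R k l)).
    apply Rmult_lt_0_compat; [apply Rinv_0_lt_compat; auto|lra].
Qed.

(** * Monotone variational inequalities *)

Lemma convex_fsum n (C : vec n -> Prop) : is_convex C ->
  forall k (lam : Fin.t k -> R) (y : Fin.t k -> vec n),
  simplex k lam -> (forall j, C (y j)) -> C (fun c => fsum k (fun j => lam j * y j c)).
Proof.
  intros HC k. induction k as [|k IH]; intros lam y [H1 H2] Hy; simpl in H2 |- *; [lra|].
  assert (Hr : 0 <= fsum k (fun j => lam (Fin.FS j))) by (apply fsum_nonneg; auto).
  destruct (Req_dec (lam Fin.F1) 1) as [E|E].
  - assert (Z : forall j, lam (Fin.FS j) = 0) by (apply (fsum_nonneg_eq0 k (fun j => lam (Fin.FS j))); auto; lra).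
    replace (fun c => _) with (y Fin.F1); auto.
    apply functional_extensionality; intros c. rewrite E, (fsum_ext _ _ (fun _ => 0)), fsum_zero.
    + ring.
    + intros j; rewrite Z; ring.
  - set (s := fsum k (fun j => lam (Fin.FS j))). assert (Hs : 0 < s) by (pose proof (H1 Fin.F1); unfold s; lra).
    assert (Hz : C (fun c => fsum k (fun j => (/ s * lam (Fin.FS j)) * y (Fin.FS j) c)))
      by (apply IH; auto; apply simplex_normalize; auto).
    pose proof (HC (y Fin.F1) _ (lam Fin.F1) (Hy Fin.F1) Hz) as HH.
    replace (fun c => _) with (fun i => lam Fin.F1 * y Fin.F1 i
                                 + (1 - lam Fin.F1) * fsum k (fun j => / s * lam (Fin.FS j) * y (Fin.FS j) i)).
    + apply HH. pose proof (H1 Fin.F1). lra.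
    + apply functional_extensionality; intros c. f_equal.
      rewrite (fsum_ext _ _ (fun j => / s * (lam (Fin.FS j) * y (Fin.FS j) c))), fsum_scal by (intros; ring).
      replace (1 - lam Fin.F1) with s by (unfold s; lra). field. lra.
Qed.

Lemma inner_vsub_convex_r n k (a z : vec n) (lam : Fin.t k -> R) (y : Fin.t k -> vec n) : fsum k lam = 1 ->
  inner a (vsub z (fun c => fsum k (fun j => lam j * y j c))) = fsum k (fun j => lam j * inner a (vsub z (y j))).
Proof.
  intros H. rewrite (inner_ext _ _ a _ (fun c => fsum k (fun j => lam j * vsub z (y j) c))).
  - rewrite inner_fsum_r. apply fsum_ext. intros j. apply inner_scal_r.
  - auto.
  - intros c. unfold vsub.
    rewrite (fsum_ext k (fun j => lam j * (z c - y j c)) (fun j => z c * lam j - lam j * y j c)) by (intros; ring).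
    rewrite fsum_minus, fsum_scal, H. ring.
Qed.

Lemma continuous_on_subset n (K C : vec n -> Prop) G :
  (forall x, C x -> K x) -> continuous_on K G -> continuous_on C G.
Proof. intros HC H x Cx eps He. destruct (H x (HC x Cx) eps He) as [d [Hd H2]]. exists d. split; auto. Qed.

Lemma monotone_on_subset n (K C : vec n -> Prop) G :
  (forall x, C x -> K x) -> monotone_on K G -> monotone_on C G.
Proof. intros HC H x y Cx Cy. apply H; auto. Qed.

Lemma Sol_subset n (K C : vec n -> Prop) G x : (forall y, C y -> K y) -> C x -> Sol G K x -> Sol G C x.
Proof. intros HC Cx [_ Hx]. split; auto. Qed.

Lemma Minty n (C : vec n -> Prop) (G : vec n -> vec n) x : is_convex C -> continuous_on C G -> C x ->
  (forall y, C y -> 0 <= inner (G y) (vsub y x)) -> Sol G C x.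
Proof.
  intros HC HG Cx H. split; auto. intros y Cy. apply Rnot_lt_le. intros P.
  set (eta := - inner (G x) (vsub y x)). assert (Heta : 0 < eta) by (unfold eta; lra).
  set (N := vnorm (vsub y x)). assert (HN : 0 <= N) by apply vnorm_nonneg.
  destruct (HG x Cx (eta / (N + 1))) as [del [Hdel Hd]]; [apply Rdiv_lt_0_compat; lra|].
  set (t := Rmin 1 (del / (N + 1))).
  assert (Ht : 0 < t <= 1)
    by (unfold t; split; [apply Rmin_glb_lt; [lra|apply Rdiv_lt_0_compat; lra]|apply Rmin_l]).
  set (z := fun i => t * y i + (1 - t) * x i).
  assert (Cz : C z) by (apply HC; auto; lra).
  assert (Hzx : vdist z x < del).
  { unfold vdist, z. rewrite vsub_convex, vnorm_scal, Rabs_pos_eq by lra. fold N.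
    assert (t * N <= del / (N+1) * N) by (apply Rmult_le_compat_r; auto; apply Rmin_r).
    pose proof (mult_div_succ_lt N del HN Hdel). lra. }
  specialize (Hd z Cz Hzx). specialize (H z Cz).
  unfold z in H. rewrite vsub_convex, inner_scal_r in H. fold z in H.
  assert (0 <= inner (G z) (vsub y x)) by (apply Rmult_le_reg_l with t; lra).
  pose proof (Rabs_le_inv _ _ (inner_lipschitz_l n (G z) (G x) (vsub y x))). fold N in H1.
  assert (vdist (G z) (G x) * N <= eta / (N + 1) * N) by (apply Rmult_le_compat_r; lra).
  pose proof (mult_div_succ_lt N eta HN Heta). unfold eta in *. lra.
Qed.

Lemma Sol_Minty n (C : vec n -> Prop) G x : monotone_on C G ->
  Sol G C x -> forall y, C y -> 0 <= inner (G y) (vsub y x).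
Proof.
  intros Hm [Cx Hx] y Cy. specialize (Hm x y Cx Cy). specialize (Hx y Cy).
  rewrite inner_sub_l in Hm. lra.
Qed.

Lemma Sol_convex n (C : vec n -> Prop) G : is_convex C -> continuous_on C G -> monotone_on C G ->
  is_convex (Sol G C).
Proof.
  intros HC HG Hm x1 x2 t S1 S2 Ht. apply Minty; auto; [apply HC; auto; [apply S1|apply S2]|].
  intros y Cy. pose proof (Sol_Minty n C G x1 Hm S1 y Cy). pose proof (Sol_Minty n C G x2 Hm S2 y Cy).
  rewrite (inner_ext _ _ (G y) _ (fun i => t * vsub y x1 i + (1 - t) * vsub y x2 i)), inner_lin_r
    by (auto; intros; unfold vsub; ring).
  nra.
Qed.

Definition cap_ball {n} (K : vec n -> Prop) (r : R) : vec n -> Prop := fun z => K z /\ vnorm z <= r.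

Lemma cap_ball_closed n (K : vec n -> Prop) r : is_closed K -> is_closed (cap_ball K r).
Proof. intros HK. apply closed_and; auto. apply closed_vnorm_le. Qed.

Lemma cap_ball_convex n (K : vec n -> Prop) r : is_convex K -> is_convex (cap_ball K r).
Proof.
  intros HK x y t [Kx Nx] [Ky Ny] Ht. split; [apply HK; auto|].
  eapply Rle_trans; [apply vnorm_convex; auto|]. nra.
Qed.

Lemma Sol_cap_ball_interior n (K : vec n -> Prop) G r x : is_convex K ->
  Sol G (cap_ball K r) x -> vnorm x < r -> Sol G K x.
Proof.
  intros HK [[Kx Nx] Hx] Hlt. split; auto. intros y Ky.
  set (D := vdist y x). assert (HD : 0 <= D) by apply vdist_nonneg.
  set (t := Rmin 1 ((r - vnorm x) / (D + 1))).
  assert (Ht : 0 < t <= 1)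
    by (unfold t; split; [apply Rmin_glb_lt; [lra|apply Rdiv_lt_0_compat; lra]|apply Rmin_l]).
  set (w := fun i => t * y i + (1 - t) * x i).
  assert (Hw : cap_ball K r w).
  { split; [apply HK; auto; lra|].
    pose proof (vnorm_le_vdist n w x) as H. unfold vdist at 1, w in H.
    rewrite vsub_convex, vnorm_scal, Rabs_pos_eq in H by lra. fold (vdist y x) D w in H.
    assert (t * D <= (r - vnorm x) / (D + 1) * D) by (apply Rmult_le_compat_r; auto; apply Rmin_r).
    pose proof (mult_div_succ_lt D (r - vnorm x) HD). lra. }
  specialize (Hx w Hw). unfold w in Hx. rewrite vsub_convex, inner_scal_r in Hx.
  apply Rmult_le_reg_l with t; lra.
Qed.

(* Otherwise the segment from [x] to a solution on [K] would contain solutions on [K] of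
   norm larger than [M]. *)
Lemma Sol_cap_ball_vnorm_le n (K : vec n -> Prop) G M r : is_convex K -> continuous_on K G ->
  monotone_on K G -> M < r -> (forall x, Sol G K x -> vnorm x <= M) -> (exists x, Sol G K x) ->
  forall x, Sol G (cap_ball K r) x -> vnorm x <= M.
Proof.
  intros HK HG Hm HMr HM [xs Hxs] x Hx. apply Rnot_lt_le. intros P.
  assert (Hsub : forall y, cap_ball K r y -> K y) by (intros y [Ky _]; auto).
  pose proof (HM xs Hxs) as Nxs. pose proof (vnorm_nonneg n xs). assert (Nx : vnorm x <= r) by apply Hx.
  set (q := (vnorm x - M) / (r + M + 1)).
  assert (Hq : 0 < q <= 1).
  { unfold q. split; [apply Rdiv_lt_0_compat; lra|].
    apply Rmult_le_reg_r with (r + M + 1); [lra|]. unfold Rdiv. rewrite Rmult_assoc, Rinv_l; lra. }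
  set (z := fun i => (1 - q) * x i + (1 - (1 - q)) * xs i).
  assert (Hz : Sol G (cap_ball K r) z).
  { apply (Sol_convex n (cap_ball K r)); auto; [apply cap_ball_convex; auto
      |apply (continuous_on_subset _ K); auto|apply (monotone_on_subset _ K); auto| |lra].
    apply Sol_subset with K; auto. split; [apply Hxs|lra]. }
  assert (Nz : vnorm z < r) by (eapply Rle_lt_trans; [apply vnorm_convex; lra|nra]).
  pose proof (HM z (Sol_cap_ball_interior n K G r z HK Hz Nz)).
  pose proof (vnorm_le_vdist n x z).
  assert (vdist x z = q * vdist x xs).
  { unfold vdist, z. rewrite (vnorm_ext _ _ (fun i => q * vsub x xs i)) by (intros; unfold vsub; ring).
    rewrite vnorm_scal, Rabs_pos_eq by lra. reflexivity. }
  pose proof (vdist_le_vnorm n x xs).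
  assert (q * vdist x xs <= q * (r + M)) by (apply Rmult_le_compat_l; lra).
  pose proof (mult_div_succ_lt (r + M) (vnorm x - M)). unfold q in *. rewrite Rmult_comm in H4. lra.
Qed.

(* Otherwise, by Gordan's alternative, the quadratic form [A] below, nonnegative by
   monotonicity, would be negative. *)
Lemma monotone_finite_Minty n (C : vec n -> Prop) G k (ys : Fin.t k -> vec n) :
  is_convex C -> monotone_on C G -> (0 < k)%nat -> (forall i, C (ys i)) ->
  exists x, C x /\ forall i, 0 <= inner (G (ys i)) (vsub (ys i) x).
Proof.
  intros HC Hm Hk Cys.
  set (A := fun i j => inner (G (ys i)) (vsub (ys i) (ys j))).
  destruct (gordan k k (fun i j => - A i j) Hk) as [[lam [Hlam Hpos]] | [xi [Hxi Hneg]]].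
  - exfalso.
    assert (P : 0 < fsum k (fun j => lam j * fsum k (fun i => lam i * - A i j))) by (apply fsum_convex_pos; auto).
    assert (Q : 0 <= fsum k (fun i => lam i * fsum k (fun j => lam j * A i j))).
    { apply quad_form_nonneg; [apply Hlam|]. intros i j. unfold A.
      specialize (Hm (ys j) (ys i) (Cys j) (Cys i)). rewrite inner_sub_l, !inner_sub_r in Hm.
      rewrite !inner_sub_r. lra. }
    assert (fsum k (fun j => lam j * fsum k (fun i => lam i * - A i j))
            = - fsum k (fun i => lam i * fsum k (fun j => lam j * A i j))).
    { transitivity (fsum k (fun j => fsum k (fun i => - (lam j * lam i * A i j)))).
      { apply fsum_ext; intros j. rewrite <- fsum_scal. apply fsum_ext; intros; ring. }
      rewrite fsum_comm, <- fsum_opp. apply fsum_ext; intros i.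
      rewrite <- fsum_scal, <- fsum_opp. apply fsum_ext; intros; ring. }
    lra.
  - exists (fun c => fsum k (fun j => xi j * ys j c)). split; [apply convex_fsum; auto|].
    intros i. rewrite inner_vsub_convex_r by apply Hxi. specialize (Hneg i). unfold inner in Hneg.
    rewrite (fsum_ext _ _ (fun j => - (xi j * A i j))), fsum_opp in Hneg by (intros; ring).
    unfold A in Hneg. lra.
Qed.

Fixpoint fun_of_list {A} (l : list A) : Fin.t (length l) -> A :=
  match l return Fin.t (length l) -> A with
  | [] => fun i => Fin.case0 (fun _ => A) i
  | a :: l' => fcons a (fun_of_list l')
  end.

Lemma fun_of_list_In {A} (l : list A) a : In a l -> exists i, fun_of_list l i = a.
Proof.
  induction l; simpl; [contradiction|]. intros [E|H].
  - exists Fin.F1. subst; reflexivity.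
  - destruct (IHl H) as [i Hi]. exists (Fin.FS i). simpl. auto.
Qed.

(* Minty's dual inequalities define closed half-spaces with the finite intersection
   property. *)
Theorem Sol_exists_compact n r (C : vec n -> Prop) (G : vec n -> vec n) :
  is_closed C -> is_convex C -> (exists x, C x) -> (forall x, C x -> vnorm x <= r) ->
  continuous_on C G -> monotone_on C G -> exists x, Sol G C x.
Proof.
  intros Hcl Hcv [x0 Cx0] Hb HG Hm.
  destruct (closed_bounded_FIP n r C (sig C) (fun y x => 0 <= inner (G (proj1_sig y)) (vsub (proj1_sig y) x)))
    as [x [Cx Hx]]; auto.
  - intros x Cx. apply vnorm_le_box, Hb; auto.
  - intros [y Cy]; simpl. apply (closed_ge0_lipschitz n _ (vnorm (G y))); [apply vnorm_nonneg|].
    intros u v. rewrite Rabs_minus_sym, !inner_sub_r.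
    replace (inner (G y) y - inner (G y) v - (inner (G y) y - inner (G y) u))
      with (inner (G y) u - inner (G y) v) by ring.
    apply inner_lipschitz_r.
  - intros [|p l']; [exists x0; split; auto; intros j []|].
    set (l := p :: l').
    destruct (monotone_finite_Minty n C G (length l) (fun i => proj1_sig (fun_of_list l i)))
      as [x [Cx Hx]]; auto.
    + simpl; lia.
    + intros i. apply proj2_sig.
    + exists x. split; auto. intros q Hq. destruct (fun_of_list_In l q Hq) as [i Hi]. rewrite <- Hi. auto.
  - exists x. apply Minty; auto. intros y Cy. apply (Hx (exist _ y Cy)).
Qed.

(** * Scalarization *)

Lemma inner_Fxi n m (F : Fin.t m -> vec n -> vec n) xi x v :
  inner (Fxi F xi x) v = fsum m (fun l => xi l * inner (F l x) v).
Proof.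
  unfold inner, Fxi. rewrite (fsum_ext n _ (fun i => fsum m (fun l => xi l * F l x i * v i))).
  - rewrite fsum_comm. apply fsum_ext; intros l. rewrite <- fsum_scal. apply fsum_ext; intros; ring.
  - intros i. rewrite Rmult_comm, <- fsum_scal. apply fsum_ext; intros; ring.
Qed.

Lemma Fxi_monotone n m K (F : Fin.t m -> vec n -> vec n) xi : (forall l, 0 <= xi l) ->
  (forall l, monotone_on K (F l)) -> monotone_on K (Fxi F xi).
Proof.
  intros H0 Hm y z Ky Kz. rewrite inner_sub_l, !inner_Fxi, <- fsum_minus. apply fsum_nonneg. intros l.
  specialize (Hm l y z Ky Kz). rewrite inner_sub_l in Hm. specialize (H0 l). nra.
Qed.

Lemma uniform_delta m (P : Fin.t m -> R -> Prop) : (forall l d d', P l d -> 0 < d' <= d -> P l d') ->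
  (forall l, exists d, 0 < d /\ P l d) -> exists d, 0 < d /\ forall l, P l d.
Proof.
  induction m; intros Hmon H; [exists 1; split; [lra|intros l; inversion l]|].
  destruct (IHm (fun l d => P (Fin.FS l) d)) as [d1 [Hd1 H1]]; auto.
  { intros l d d'; apply Hmon. }
  destruct (H Fin.F1) as [d0 [Hd0 H0]].
  assert (Hmin : 0 < Rmin d0 d1) by (apply Rmin_glb_lt; auto).
  exists (Rmin d0 d1). split; auto.
  intros l. apply (Fin.caseS' l (fun l => P l (Rmin d0 d1))).
  - apply Hmon with d0; auto. split; [auto|apply Rmin_l].
  - intros p. apply Hmon with d1; auto. split; [auto|apply Rmin_r].
Qed.

Lemma Fxi_continuous n m K (F : Fin.t m -> vec n -> vec n) xi : (forall l, continuous_on K (F l)) ->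
  continuous_on K (Fxi F xi).
Proof.
  intros Hc x Kx eps He. set (S := fsum m (fun l => Rabs (xi l)) + 1).
  assert (HS : 0 < S) by (unfold S; pose proof (fsum_nonneg m _ (fun l => Rabs_pos (xi l))); lra).
  destruct (uniform_delta m (fun l d => forall y, K y -> vdist y x < d -> vdist (F l y) (F l x) < eps / S))
    as [d [Hd H]].
  - intros l d d' H0 H1 y Ky Hy. apply H0; auto. lra.
  - intros l. apply Hc; auto. apply Rdiv_lt_0_compat; lra.
  - exists d. split; auto. intros y Ky Hy. unfold vdist.
    rewrite (vnorm_ext _ _ (fun i => fsum m (fun l => xi l * vsub (F l y) (F l x) i)))
      by (intros i; unfold Fxi, vsub; rewrite <- fsum_minus; apply fsum_ext; intros; ring).
    eapply Rle_lt_trans; [apply (vnorm_fsum n m (fun l i => xi l * vsub (F l y) (F l x) i))|].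
    rewrite (fsum_ext _ _ (fun l => Rabs (xi l) * vdist (F l y) (F l x))) by (intros; apply vnorm_scal).
    apply Rle_lt_trans with (fsum m (fun l => eps / S * Rabs (xi l))).
    + apply fsum_le. intros l. rewrite (Rmult_comm (eps / S)). apply Rmult_le_compat_l; [apply Rabs_pos|].
      left; apply H; auto.
    + rewrite fsum_scal. replace (fsum m (fun l => Rabs (xi l))) with (S - 1) by (unfold S; ring).
      assert (eps / S * (S - 1) = eps - eps / S) by (field; lra).
      assert (0 < eps / S) by (apply Rdiv_lt_0_compat; lra). lra.
Qed.

Lemma Sol_Fxi_SolW n m K (F : Fin.t m -> vec n -> vec n) xi x :
  simplex m xi -> Sol (Fxi F xi) K x -> SolW F K x.
Proof.
  intros Hxi [Kx Hx]. split; auto. intros y Ky Hp. specialize (Hx y Ky). rewrite inner_Fxi in Hx.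
  pose proof (fsum_convex_pos m xi (fun l => inner (F l x) (vsub x y)) Hxi Hp).
  rewrite (fsum_ext _ _ (fun l => - (xi l * inner (F l x) (vsub x y)))), fsum_opp in Hx.
  - lra.
  - intros l. rewrite !inner_sub_r. ring.
Qed.

(* Gordan's alternative; its other branch would give a convex combination of the [ys]
   improving every objective at once. *)
Lemma SolW_finite_scalarization n m K (F : Fin.t m -> vec n -> vec n) x k (ys : Fin.t k -> vec n) :
  is_convex K -> SolW F K x -> (0 < k)%nat -> (forall j, K (ys j)) ->
  exists xi, simplex m xi /\ forall j, fsum m (fun l => xi l * inner (F l x) (vsub x (ys j))) <= 0.
Proof.
  intros HK [Kx Hx] Hk Kys.
  destruct (gordan k m (fun j l => inner (F l x) (vsub x (ys j))) Hk) as [[lam [Hlam Hpos]] | [xi [Hs Hxi]]].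
  - exfalso. apply (Hx (fun c => fsum k (fun j => lam j * ys j c))); [apply convex_fsum; auto|].
    intros l. rewrite inner_vsub_convex_r by apply Hlam. apply Hpos.
  - exists xi. split; auto.
Qed.

(* The sets of admissible weights are closed in the compact simplex and have the finite
   intersection property. *)
Theorem SolW_Sol_Fxi n m K (F : Fin.t m -> vec n -> vec n) x : is_convex K -> SolW F K x ->
  exists xi, simplex m xi /\ Sol (Fxi F xi) K x.
Proof.
  intros HK Hw. destruct m as [|m'].
  { exfalso. destruct Hw as [Kx Hx]. apply (Hx x Kx). intros l; inversion l. }
  set (cv := fun y l => inner (F l x) (vsub x y)).
  destruct (closed_bounded_FIP (S m') 1 (simplex (S m')) (sig K) (fun y xi => 0 <= - inner xi (cv (proj1_sig y))))
    as [xi [Hxi Hall]]; [apply simplex_closed|apply simplex_box| | |].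
  - intros [y Ky]; simpl. apply (closed_ge0_lipschitz _ _ (vnorm (cv y))); [apply vnorm_nonneg|].
    intros u v. rewrite (inner_sym _ u), (inner_sym _ v).
    replace (- inner (cv y) u - - inner (cv y) v) with (- (inner (cv y) u - inner (cv y) v)) by ring.
    rewrite Rabs_Ropp. apply inner_lipschitz_r.
  - intros [|p l']; [exists (delta Fin.F1); split; [apply simplex_delta|intros j []]|].
    set (l := p :: l').
    destruct (SolW_finite_scalarization n (S m') K F x (length l) (fun i => proj1_sig (fun_of_list l i)))
      as [xi [Hs Hxi]]; auto.
    + simpl; lia.
    + intros i. apply proj2_sig.
    + exists xi. split; auto. intros q Hq. destruct (fun_of_list_In l q Hq) as [i Hi]. rewrite <- Hi.
      specialize (Hxi i). unfold inner, cv. lra.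
  - exists xi. split; auto. split; [apply Hw|]. intros y Ky. specialize (Hall (exist _ y Ky)). simpl in Hall.
    rewrite inner_Fxi. unfold inner at 1 in Hall. unfold cv in Hall.
    rewrite (fsum_ext _ _ (fun l => - (xi l * inner (F l x) (vsub x y)))), fsum_opp.
    + lra.
    + intros l. rewrite !inner_sub_r. ring.
Qed.

(** * Connectedness *)

Theorem unit_interval_induction (A : R -> Prop) : A 0 ->
  (forall t, 0 < t <= 1 -> (forall s, 0 <= s < t -> A s) -> A t) ->
  (forall t, 0 <= t < 1 -> A t -> exists d, 0 < d /\ forall s, t < s < t + d -> s <= 1 -> A s) ->
  A 1.
Proof.
  intros H0 Hcl Hop.
  set (E := fun t => 0 <= t <= 1 /\ forall s, 0 <= s <= t -> A s).
  assert (E0 : E 0) by (split; [lra|]; intros s Hs; replace s with 0 by lra; auto).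
  destruct (completeness E) as [ts [Hub Hlub]]; [exists 1; intros t [Ht _]; lra|exists 0; auto|].
  assert (Hts : 0 <= ts <= 1) by (split; [apply Hub; auto|apply Hlub; intros t [Ht _]; lra]).
  assert (Hbelow : forall s, 0 <= s < ts -> A s).
  { intros s Hs. apply NNPP; intros C. assert (ts <= s); [|lra]. apply Hlub. intros t [Ht Ht2].
    apply Rnot_lt_le. intros Hst. apply C, Ht2. lra. }
  assert (Ets : E ts).
  { split; auto. intros s Hs. destruct (Req_dec s ts) as [->|]; [|apply Hbelow; lra].
    destruct (Req_dec ts 0) as [->|]; auto. apply Hcl; auto. lra. }
  destruct (Req_dec ts 1) as [E1|E1]; [rewrite <- E1; apply Ets; lra|exfalso].
  destruct (Hop ts) as [d [Hd Hs]]; [lra|apply Ets; lra|].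
  set (u := Rmin (ts + d/2) 1).
  assert (Eu : E u).
  { assert (ts <= u <= ts + d/2 /\ u <= 1)
      by (unfold u; pose proof (Rmin_l (ts + d/2) 1); pose proof (Rmin_r (ts + d/2) 1);
          repeat split; try apply Rmin_glb; lra).
    split; [lra|]. intros s Hs'. destruct (Rle_dec s ts); [apply Ets; lra|]. apply Hs; lra. }
  apply Hub in Eu. unfold u, Rmin in Eu. destruct (Rle_dec (ts + d/2) 1); lra.
Qed.

Theorem convex_connected n (S : vec n -> Prop) : is_convex S -> is_connected S.
Proof.
  intros HS U V Uo Vo Hcov Hdis [b [Sb Ub]] [a [Sa Va]].
  set (z := fun r => fun i : Fin.t n => r * a i + (1 - r) * b i).
  assert (Sz : forall r, 0 <= r <= 1 -> S (z r)) by (intros; apply HS; auto).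
  assert (z0 : z 0 = b) by (apply functional_extensionality; intros; unfold z; ring).
  assert (z1 : z 1 = a) by (apply functional_extensionality; intros; unfold z; ring).
  set (D := vdist a b). assert (HD : 0 <= D) by apply vdist_nonneg.
  assert (Hnear : forall eps r s, 0 < eps -> Rabs (s - r) < eps / (D + 1) -> vdist (z s) (z r) < eps).
  { intros eps r s He Hs. unfold z. rewrite vdist_convex. fold D.
    apply Rle_lt_trans with (eps / (D + 1) * D); [apply Rmult_le_compat_r; lra|].
    rewrite Rmult_comm. apply mult_div_succ_lt; lra. }
  apply (Hdis a Sa); auto. rewrite <- z1.
  apply (unit_interval_induction (fun r => U (z r))); [rewrite z0; auto| |].
  - intros r Hr Hlt. destruct (Hcov (z r) (Sz r ltac:(lra))) as [H|H]; auto. exfalso.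
    destruct (Vo _ H) as [eps [He Hv]].
    set (s := r - Rmin (eps / (D + 1)) r / 2).
    assert (Hm : 0 < Rmin (eps / (D + 1)) r) by (apply Rmin_glb_lt; [apply Rdiv_lt_0_compat|]; lra).
    pose proof (Rmin_l (eps / (D + 1)) r). pose proof (Rmin_r (eps / (D + 1)) r).
    apply (Hdis (z s)); [apply Sz; unfold s; lra|apply Hlt; unfold s; lra|].
    apply Hv, Hnear; auto. unfold s. rewrite Rabs_left; lra.
  - intros r Hr Ur. destruct (Uo _ Ur) as [eps [He Hu]].
    exists (eps / (D + 1)). split; [apply Rdiv_lt_0_compat; lra|].
    intros s Hs Hs1. apply Hu, Hnear; auto. rewrite Rabs_right; lra.
Qed.

Definition path {m} (a b : Fin.t m -> R) (t : R) : Fin.t m -> R := fun l => (1 - t) * a l + t * b l.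

Lemma path_simplex m (a b : Fin.t m -> R) t :
  simplex m a -> simplex m b -> 0 <= t <= 1 -> simplex m (path a b t).
Proof.
  intros [Ha0 Ha1] [Hb0 Hb1] Ht. split.
  - intros l. unfold path. specialize (Ha0 l). specialize (Hb0 l). nra.
  - unfold path. rewrite fsum_plus, !fsum_scal, Ha1, Hb1. ring.
Qed.

Lemma path0 m (a b : Fin.t m -> R) : path a b 0 = a.
Proof. apply functional_extensionality; intros; unfold path; ring. Qed.

Lemma path1 m (a b : Fin.t m -> R) : path a b 1 = b.
Proof. apply functional_extensionality; intros; unfold path; ring. Qed.

Lemma fsum_convex_lt m (xi c : Fin.t m -> R) r :
  simplex m xi -> (forall l, c l < r) -> fsum m (fun l => xi l * c l) < r.
Proof.
  intros Hxi Hc. pose proof (fsum_convex_pos m xi (fun l => r - c l) Hxi) as H.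
  rewrite (fsum_ext _ _ (fun l => r * xi l - xi l * c l)), fsum_minus, fsum_scal in H by (intros; ring).
  destruct Hxi as [_ H1]. rewrite H1 in H. assert (forall l, 0 < r - c l) by (intros l; specialize (Hc l); lra).
  specialize (H H0). lra.
Qed.

Lemma inner_vsub_continuous n K (G : vec n -> vec n) y xb : continuous_on K G -> K xb ->
  forall eps, 0 < eps -> exists d, 0 < d /\ forall x, K x -> vdist x xb < d ->
    Rabs (inner (G x) (vsub y x) - inner (G xb) (vsub y xb)) < eps.
Proof.
  intros HG Kxb eps He.
  set (N := vdist y xb + 1). set (Q := vnorm (G xb) + 1).
  assert (HN : 1 <= N) by (unfold N; pose proof (vdist_nonneg n y xb); lra).
  assert (HQ : 1 <= Q) by (unfold Q; pose proof (vnorm_nonneg n (G xb)); lra).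
  destruct (HG xb Kxb (eps / (2 * N))) as [d1 [Hd1 H1]]; [apply Rdiv_lt_0_compat; lra|].
  assert (HeQ : 0 < eps / (2 * Q)) by (apply Rdiv_lt_0_compat; lra).
  exists (Rmin 1 (Rmin d1 (eps / (2 * Q)))). split; [repeat apply Rmin_glb_lt; lra|].
  intros x Kx Hx.
  pose proof (Rmin_l 1 (Rmin d1 (eps / (2 * Q)))). pose proof (Rmin_r 1 (Rmin d1 (eps / (2 * Q)))).
  pose proof (Rmin_l d1 (eps / (2 * Q))). pose proof (Rmin_r d1 (eps / (2 * Q))).
  replace (inner (G x) (vsub y x) - inner (G xb) (vsub y xb))
    with (inner (vsub (G x) (G xb)) (vsub y x) + inner (G xb) (vsub xb x))
    by (rewrite !inner_sub_l, !inner_sub_r; ring).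
  eapply Rle_lt_trans; [apply Rabs_triang|].
  pose proof (Cauchy_Schwarz n (vsub (G x) (G xb)) (vsub y x)) as C1.
  pose proof (Cauchy_Schwarz n (G xb) (vsub xb x)) as C2.
  fold (vdist (G x) (G xb)) (vdist y x) in C1. fold (vdist xb x) in C2. rewrite vdist_sym in C2.
  specialize (H1 x Kx ltac:(lra)).
  assert (Nyx : vdist y x <= N)
    by (pose proof (vdist_triang n y xb x); rewrite (vdist_sym n xb x) in *; unfold N; lra).
  pose proof (vdist_nonneg n (G x) (G xb)). pose proof (vdist_nonneg n x xb).
  assert (T1 : vdist (G x) (G xb) * vdist y x < eps / 2).
  { apply Rle_lt_trans with (vdist (G x) (G xb) * N); [apply Rmult_le_compat_l; lra|].
    replace (eps / 2) with (eps / (2 * N) * N) by (field; lra). apply Rmult_lt_compat_r; lra. }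
  assert (T2 : vnorm (G xb) * vdist x xb <= eps / 2).
  { assert (vnorm (G xb) <= Q) by (unfold Q; lra).
    replace (eps / 2) with (Q * (eps / (2 * Q))) by (field; lra).
    apply Rmult_le_compat; [apply vnorm_nonneg|lra|lra|lra]. }
  lra.
Qed.

(* Closedness of the graph of the solution map along a segment [t |-> path a b t] of weights,
   tested against one point [y]. *)
Lemma Fxi_path_inner_limit n m K (F : Fin.t m -> vec n -> vec n) a b t0 xb y :
  (forall l, continuous_on K (F l)) -> simplex m a -> simplex m b -> K xb ->
  (forall d e, 0 < d -> 0 < e -> exists t x, Rabs (t - t0) < d /\ 0 <= t <= 1 /\ K x /\
      0 <= inner (Fxi F (path a b t) x) (vsub y x) /\ vdist x xb < e) ->
  0 <= inner (Fxi F (path a b t0) xb) (vsub y xb).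
Proof.
  intros Hc Ha Hb Kxb H. set (g := fun l x => inner (F l x) (vsub y x)).
  rewrite inner_Fxi. change (0 <= fsum m (fun l => path a b t0 l * g l xb)).
  apply Rnot_lt_le. intros P.
  set (eta := - fsum m (fun l => path a b t0 l * g l xb)). assert (Heta : 0 < eta) by (unfold eta; lra).
  set (D := Rabs (fsum m (fun l => (b l - a l) * g l xb))). assert (HD : 0 <= D) by apply Rabs_pos.
  destruct (uniform_delta m (fun l d => forall x, K x -> vdist x xb < d -> Rabs (g l x - g l xb) < eta / 2))
    as [e [He He2]].
  { intros l d d' H1 H2 x Kx Hx. apply H1; auto. lra. }
  { intros l. apply inner_vsub_continuous; auto. lra. }
  destruct (H (eta / (2 * (D + 1))) e) as [t [x [Ht [Ht01 [Kx [Hf Hd]]]]]]; auto.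
  { apply Rdiv_lt_0_compat; lra. }
  rewrite inner_Fxi in Hf. change (0 <= fsum m (fun l => path a b t l * g l x)) in Hf.
  assert (Eq : fsum m (fun l => path a b t l * g l x) = fsum m (fun l => path a b t l * (g l x - g l xb))
                 + (t - t0) * fsum m (fun l => (b l - a l) * g l xb) - eta).
  { unfold eta. rewrite <- fsum_scal, <- fsum_plus, Rminus_def, Ropp_involutive, <- fsum_plus.
    apply fsum_ext; intros l. unfold path. ring. }
  assert (T1 : fsum m (fun l => path a b t l * (g l x - g l xb)) < eta / 2).
  { apply fsum_convex_lt; [apply path_simplex; auto|].
    intros l. specialize (He2 l x Kx Hd). apply Rabs_def2 in He2. lra. }
  assert (T2 : (t - t0) * fsum m (fun l => (b l - a l) * g l xb) < eta / 2).
  { eapply Rle_lt_trans; [apply Rle_abs|]. rewrite Rabs_mult. fold D.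
    apply Rle_lt_trans with (eta / (2 * (D + 1)) * D); [apply Rmult_le_compat_r; lra|].
    rewrite Rmult_comm, Rdiv_mult_distr. apply mult_div_succ_lt; lra. }
  lra.
Qed.

Lemma exists_left_close t d : 0 < t -> 0 < d -> exists s, 0 <= s < t /\ Rabs (s - t) < d.
Proof.
  intros Ht Hd. exists (t - Rmin d t / 2).
  pose proof (Rmin_l d t). pose proof (Rmin_r d t). assert (0 < Rmin d t) by (apply Rmin_glb_lt; auto).
  split; [lra|]. rewrite Rabs_left; lra.
Qed.

Section WeakParetoSolutions.

Variables (n m : nat) (K : vec n -> Prop) (F : Fin.t m -> vec n -> vec n) (M : R) (x0 : vec n).
Hypotheses (HKcl : is_closed K) (HKcv : is_convex K)
  (Hcont : forall l, continuous_on K (F l)) (Hmono : forall l, monotone_on K (F l))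
  (HM : forall x, SolW F K x -> vnorm x <= M) (Hx0 : SolW F K x0).

Let KR := cap_ball K (M + 1).

Lemma KR_subset : forall x, KR x -> K x.
Proof. intros x [Kx _]; auto. Qed.

Lemma Sol_vnorm_le xi x : simplex m xi -> Sol (Fxi F xi) K x -> vnorm x <= M.
Proof. intros Hxi Hx. apply HM, (Sol_Fxi_SolW n m K F xi); auto. Qed.

Lemma KR_Sol_exists xi : simplex m xi -> exists x, Sol (Fxi F xi) KR x.
Proof.
  intros Hxi. apply (Sol_exists_compact n (M + 1)).
  - apply cap_ball_closed; auto.
  - apply cap_ball_convex; auto.
  - exists x0. split; [apply Hx0|]. pose proof (HM x0 Hx0). lra.
  - intros x [_ Hx]; auto.
  - apply (continuous_on_subset _ K), Fxi_continuous; auto. apply KR_subset.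
  - apply (monotone_on_subset _ K), Fxi_monotone; auto; [apply KR_subset|apply Hxi].
Qed.

Lemma KR_Sol_iff xi : simplex m xi -> (exists x, Sol (Fxi F xi) K x) ->
  forall x, Sol (Fxi F xi) KR x <-> Sol (Fxi F xi) K x.
Proof.
  intros Hxi Hex x. split; intros Hx.
  - apply (Sol_cap_ball_interior n K _ (M + 1)); auto.
    assert (vnorm x <= M); [|lra].
    apply (Sol_cap_ball_vnorm_le n K (Fxi F xi) M (M + 1)); auto; try lra.
    + apply Fxi_continuous; auto.
    + apply Fxi_monotone; auto. apply Hxi.
    + intros z. apply Sol_vnorm_le; auto.
  - apply Sol_subset with K; [apply KR_subset| |auto]. split; [apply Hx|].
    pose proof (Sol_vnorm_le xi x Hxi Hx). lra.
Qed.

(* The values lie in a compact set and the graph is closed. *)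
Lemma KR_Sol_path_usc a b t (W : vec n -> Prop) :
  simplex m a -> simplex m b -> 0 <= t <= 1 -> is_open W ->
  (forall x, Sol (Fxi F (path a b t)) KR x -> W x) ->
  exists d, 0 < d /\ forall s, 0 <= s <= 1 -> Rabs (s - t) < d ->
    forall x, Sol (Fxi F (path a b s)) KR x -> W x.
Proof.
  intros Ha Hb Ht HW Hsub. apply NNPP. intros C.
  assert (Happ : forall d, 0 < d -> exists s x, Rabs (s - t) < d /\ (KR x /\ ~ W x) /\
                   (0 <= s <= 1 /\ Sol (Fxi F (path a b s)) KR x)).
  { intros d Hd. apply NNPP. intros C2. apply C. exists d. split; auto. intros s Hs Hst x Hx.
    apply NNPP. intros nW. apply C2. exists s, x. split; auto. split; [split; [apply Hx|auto]|auto]. }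
  destruct (closed_bounded_cluster n (M + 1) (fun x => KR x /\ ~ W x)
              (fun s x => 0 <= s <= 1 /\ Sol (Fxi F (path a b s)) KR x) t) as [xb [[KRxb nWxb] Hxb]]; auto.
  - apply closed_and; [apply cap_ball_closed; auto|apply open_compl_closed; auto].
  - intros x [[_ Hx] _]. apply vnorm_le_box; auto.
  - apply nWxb, Hsub. split; auto. intros y Hy.
    apply (Fxi_path_inner_limit n m KR F a b t xb y); auto.
    + intros l. apply (continuous_on_subset _ K); auto. apply KR_subset.
    + intros d e Hd He. destruct (Hxb d e Hd He) as [s [x [Hs [[KRx _] [[Hs01 Sx] Hdx]]]]].
      exists s, x. split; [|split; [|split; [|split]]]; auto. apply Sx; auto.
Qed.

(* The solvable parameters are closed (solutions stay in the compact ball of radius [M]) and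
   open (nearby truncated solutions stay inside the open ball of radius [M + 1]). *)
Lemma Sol_path_exists a b : simplex m a -> simplex m b ->
  (exists x, Sol (Fxi F a) K x) -> exists x, Sol (Fxi F b) K x.
Proof.
  intros Ha Hb Hex. rewrite <- (path1 m a b).
  assert (Hp : forall t, 0 <= t <= 1 -> simplex m (path a b t)) by (intros; apply path_simplex; auto).
  apply (unit_interval_induction (fun t => exists x, Sol (Fxi F (path a b t)) K x)); [rewrite path0; auto| |].
  - intros t Ht Hlt. apply NNPP. intros Hno.
    destruct (KR_Sol_path_usc a b t (fun x => M + 1/2 < vnorm x)) as [d [Hd Hw]]; auto; try lra.
    + apply open_vnorm_gt.
    + intros x Hx. apply Rnot_le_lt. intros Nx. apply Hno. exists x.
      apply (Sol_cap_ball_interior n K _ (M + 1)); auto. lra.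
    + destruct (exists_left_close t d) as [s [Hs Hsd]]; try lra.
      destruct (Hlt s Hs) as [x Hx]. pose proof (Sol_vnorm_le _ x (Hp s ltac:(lra)) Hx).
      assert (M + 1/2 < vnorm x); [|lra].
      apply (Hw s); [lra|auto|]. apply KR_Sol_iff; eauto. apply Hp; lra.
  - intros t Ht Hext.
    destruct (KR_Sol_path_usc a b t (fun x => vnorm x < M + 1)) as [d [Hd Hw]]; auto; try lra.
    + apply open_vnorm_lt.
    + intros x Hx. apply (KR_Sol_iff _ (Hp t ltac:(lra)) Hext) in Hx.
      pose proof (Sol_vnorm_le _ x (Hp t ltac:(lra)) Hx). lra.
    + exists d. split; auto. intros s Hs Hs1.
      destruct (KR_Sol_exists (path a b s)) as [x Hx]; [apply Hp; lra|].
      exists x. apply (Sol_cap_ball_interior n K _ (M + 1)); auto.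
      apply (Hw s); auto; [lra|rewrite Rabs_right; lra].
Qed.

Lemma Sol_exists xi : simplex m xi -> exists x, Sol (Fxi F xi) K x.
Proof.
  intros Hxi. destruct (SolW_Sol_Fxi n m K F x0 HKcv Hx0) as [xi0 [H0 S0]].
  apply (Sol_path_exists xi0); eauto.
Qed.

Lemma Sol_path_usc a b t (W : vec n -> Prop) :
  simplex m a -> simplex m b -> 0 <= t <= 1 -> is_open W ->
  (forall x, Sol (Fxi F (path a b t)) K x -> W x) ->
  exists d, 0 < d /\ forall s, 0 <= s <= 1 -> Rabs (s - t) < d ->
    forall x, Sol (Fxi F (path a b s)) K x -> W x.
Proof.
  intros Ha Hb Ht HW Hsub.
  assert (Hiff : forall s, 0 <= s <= 1 -> forall x, Sol (Fxi F (path a b s)) KR x <-> Sol (Fxi F (path a b s)) K x)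
    by (intros s Hs; apply KR_Sol_iff; [|apply Sol_exists]; apply path_simplex; auto).
  destruct (KR_Sol_path_usc a b t W) as [d [Hd Hw]]; auto.
  - intros x Hx. apply Hsub, Hiff; auto.
  - exists d. split; auto. intros s Hs Hst x Hx. apply (Hw s); auto. apply Hiff; auto.
Qed.

Lemma Sol_in_one_of (U V : vec n -> Prop) : is_open U -> is_open V ->
  (forall x, SolW F K x -> U x \/ V x) -> (forall x, SolW F K x -> U x -> V x -> False) ->
  forall xi, simplex m xi -> (forall x, Sol (Fxi F xi) K x -> U x) \/ (forall x, Sol (Fxi F xi) K x -> V x).
Proof.
  intros Uo Vo Hcov Hdis xi Hxi.
  assert (Hw : forall x, Sol (Fxi F xi) K x -> SolW F K x) by (intros; apply (Sol_Fxi_SolW n m K F xi); auto).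
  destruct (classic (exists x, Sol (Fxi F xi) K x /\ U x)) as [[a [Sa Ua]]|NU].
  - left. intros b Sb. destruct (Hcov b (Hw b Sb)) as [Ub|Vb]; auto.
    assert (HSc : is_convex (Sol (Fxi F xi) K))
      by (apply Sol_convex; auto; [apply Fxi_continuous|apply Fxi_monotone; [apply Hxi|]]; auto).
    exfalso. apply (convex_connected n _ HSc U V Uo Vo (fun x Sx => Hcov x (Hw x Sx))
                                                    (fun x Sx => Hdis x (Hw x Sx))); eauto.
  - right. intros x Sx. destruct (Hcov x (Hw x Sx)) as [Ux|Vx]; auto.
    exfalso. apply NU. exists x; auto.
Qed.

(* A separation of [SolW F K] by open sets would separate the segment of weights joining
   scalarizations of two of its points, since each solution set lies on one side. *)
Theorem SolW_connected : is_connected (SolW F K).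
Proof.
  intros U V Uo Vo Hcov Hdis [xU [SU UU]] [xV [SV VV]].
  destruct (SolW_Sol_Fxi n m K F xU HKcv SU) as [a [Ha Sa]].
  destruct (SolW_Sol_Fxi n m K F xV HKcv SV) as [b [Hb Sb]].
  assert (Hp : forall t, 0 <= t <= 1 -> simplex m (path a b t)) by (intros; apply path_simplex; auto).
  assert (Hone := Sol_in_one_of U V Uo Vo Hcov Hdis).
  assert (HU : forall x, Sol (Fxi F (path a b 1)) K x -> U x).
  { apply (unit_interval_induction (fun t => forall x, Sol (Fxi F (path a b t)) K x -> U x)).
    - rewrite path0. destruct (Hone a Ha) as [H|H]; auto. exfalso. apply (Hdis xU); auto.
    - intros t Ht Hlt. destruct (Hone _ (Hp t ltac:(lra))) as [H|H]; auto. exfalso.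
      destruct (Sol_path_usc a b t V) as [d [Hd Hv]]; auto; try lra.
      destruct (exists_left_close t d) as [s [Hs Hsd]]; try lra.
      destruct (Sol_exists (path a b s)) as [x Sx]; [apply Hp; lra|].
      apply (Hdis x); [apply (Sol_Fxi_SolW n m K F (path a b s)); auto; apply Hp; lra|apply (Hlt s); auto|].
      apply (Hv s); auto. lra.
    - intros t Ht HUt. destruct (Sol_path_usc a b t U) as [d [Hd Hu]]; auto; try lra.
      exists d. split; auto. intros s Hs Hs1 x Sx. apply (Hu s); auto; [lra|rewrite Rabs_right; lra]. }
  rewrite path1 in HU. apply (Hdis xV); auto.
Qed.

End WeakParetoSolutions.

Theorem theorem3 (n m : nat) (K : vec n -> Prop) (F : Fin.t m -> vec n -> vec n)
  (HKne : exists x, K x) (HKcl : is_closed K) (HKcv : is_convex K)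
  (Hcont : forall l, continuous_on K (F l))
  (Hmono : forall l, monotone_on K (F l))
  (Hbd : is_bounded (SolW F K)) (Hne : exists x, SolW F K x) :
  is_connected (SolW F K) /\
  (forall xi, simplex m xi -> exists x, Sol (Fxi F xi) K x).
Proof.
  destruct Hbd as [M HM], Hne as [x0 Hx0]. split.
  - apply (SolW_connected n m K F M x0); auto.
  - apply (Sol_exists n m K F M x0); auto.
Qed.
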